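(* For every message $M$ and formulas $\phi,\psi$: $\vdash(\langle M\rangle\phi\to[M]\psi)\to[M](\phi\to\psi)$.
   Context: Fix a finite set $\mathcal{A}$ of agent names containing a distinguished name $\mathsf{CM}$. Messages: $M ::= a \mid B \mid (M,M)$ ($a\in\mathcal{A}$, $B$ optional data constants, pairs). $\mathcal{P}$ is a denumerable set of propositional variables containing atoms $\mathsf{k}_a(M)$ (''$a$ knows $M$''). Formulas: $\phi ::= P \mid \phi\wedge\phi \mid \phi\vee\phi \mid \neg\phi \mid \phi\to\phi \mid [M]\phi$. Abbreviations: $\mathrm{true}:=\mathsf{k}_{\mathsf{CM}}(\mathsf{CM})$, $\mathrm{false}:=\neg\mathrm{true}$, $\phi\leftrightarrow\psi:=(\phi\to\psi)\wedge(\psi\to\phi)$, $\langle M\rangle\phi:=\neg\neg(\mathsf{k}_{\mathsf{CM}}(M)\wedge\phi)$. LIiP is the smallest set of formulas containing all instances of: the axioms of an adequate Hilbert axiomatization of intuitionistic propositional logic; $\mathsf{k}_a(a)$; $(\mathsf{k}_a(M)\wedge\mathsf{k}_a(M'))\leftrightarrow\mathsf{k}_a((M,M'))$; $[M]\mathsf{k}_{\mathsf{CM}}(M)$; $[M](\phi\to\psi)\to([M]\phi\to[M]\psi)$; $[M]\phi\to(\mathsf{k}_{\mathsf{CM}}(M)\to\phi)$; $[M]\phi\to\langle M\rangle\phi$; $\phi\to[M]\phi$; and closed under modus ponens and the rule: if $\mathsf{k}_{\mathsf{CM}}(M)\to\mathsf{k}_{\mathsf{CM}}(M')$ is in the set then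 so is $[M']\phi\to[M]\phi$ for every $\phi$. Write $\vdash\phi$ for $\phi\in\mathrm{LIiP}$. *)

From Stdlib Require Import FinFun.
Set Implicit Arguments.

Section LIiP.
Variable Agent : Type.   (* finite set of agent names (finiteness assumed in the theorem) *)
Variable Data : Type.
Variable CM : Agent.

Inductive msg : Type :=
| MAgent : Agent -> msg
| MData : Data -> msg
| MPair : msg -> msg -> msg.

Inductive pvar : Type :=
| PK : Agent -> msg -> pvar
| POther : nat -> pvar.

Inductive form : Type :=
| FVar : pvar -> form
| FAnd : form -> form -> form
| FOr : form -> form -> form
| FNot : form -> form
| FImp : form -> form -> form
| FBox : msg -> form -> form.

Definition fk (a : Agent) (M : msg) : form := FVar (PK a M).
Definition ftrue : form := fk CM (MAgent CM).
Definition ffalse : form := FNot ftrue.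
Definition fiff (p q : form) : form := FAnd (FImp p q) (FImp q p).
Definition fdia (M : msg) (p : form) : form := FNot (FNot (FAnd (fk CM M) p)).

(* Intuitionistic propositional logic is given
   by the standard Hilbert axiomatization with primitive negation (Kleene). *)
Inductive LIiP : form -> Prop :=
| ax_K : forall p q, LIiP (FImp p (FImp q p))
| ax_S : forall p q r,
    LIiP (FImp (FImp p (FImp q r)) (FImp (FImp p q) (FImp p r)))
| ax_andE1 : forall p q, LIiP (FImp (FAnd p q) p)
| ax_andE2 : forall p q, LIiP (FImp (FAnd p q) q)
| ax_andI : forall p q, LIiP (FImp p (FImp q (FAnd p q)))
| ax_orI1 : forall p q, LIiP (FImp p (FOr p q))
| ax_orI2 : forall p q, LIiP (FImp q (FOr p q))
| ax_orE : forall p q r,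
    LIiP (FImp (FImp p r) (FImp (FImp q r) (FImp (FOr p q) r)))
| ax_notI : forall p q,
    LIiP (FImp (FImp p q) (FImp (FImp p (FNot q)) (FNot p)))
| ax_notE : forall p q, LIiP (FImp (FNot p) (FImp p q))
| ax_kself : forall a, LIiP (fk a (MAgent a))
| ax_kpair : forall a M M',
    LIiP (fiff (FAnd (fk a M) (fk a M')) (fk a (MPair M M')))
| ax_boxk : forall M, LIiP (FBox M (fk CM M))
| ax_boxK : forall M p q,
    LIiP (FImp (FBox M (FImp p q)) (FImp (FBox M p) (FBox M q)))
| ax_boxT : forall M p, LIiP (FImp (FBox M p) (FImp (fk CM M) p))
| ax_boxdia : forall M p, LIiP (FImp (FBox M p) (fdia M p))
| ax_persist : forall M p, LIiP (FImp p (FBox M p))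
| r_MP : forall p q, LIiP (FImp p q) -> LIiP p -> LIiP q
| r_mono : forall M M' p,
    LIiP (FImp (fk CM M) (fk CM M')) -> LIiP (FImp (FBox M' p) (FBox M p)).

End LIiP.

(* Under the hypothesis h := <M>phi -> [M]psi, knowing M and phi yields <M>phi, hence [M]psi,
   hence psi by axiom T; so h proves k_CM(M) -> (phi -> psi).  Necessitation of this
   implication (persistence) together with [M]k_CM(M) and axiom K gives [M](phi -> psi). *)

From Stdlib Require Import FinFun List.
Import ListNotations.

Section Deduction.
Variables (Agent Data : Type) (CM : Agent).
Notation form := (form Agent Data).

Inductive derives (G : list form) : form -> Prop :=
| derives_hyp : forall p, In p G -> derives G p
| derives_thm : forall p, LIiP CM p -> derives G p
| derives_mp : forall p q, derives G (FImp p q) -> derives G p -> derives G q.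

Lemma LIiP_imp_refl (p : form) : LIiP CM (FImp p p).
Proof.
  eapply r_MP; [eapply r_MP|].
  - apply (ax_S CM p (FImp p p) p).
  - apply ax_K.
  - apply (ax_K CM p p).
Qed.

Lemma deduction G a p : derives (a :: G) p -> derives G (FImp a p).
Proof.
  induction 1 as [p Hin|p Hthm|p q _ IHpq _ IHp].
  - destruct Hin as [<-|Hin].
    + apply derives_thm, LIiP_imp_refl.
    + eapply derives_mp; [apply derives_thm, ax_K|now apply derives_hyp].
  - eapply derives_mp; [apply derives_thm, ax_K|now apply derives_thm].
  - eapply derives_mp; [eapply derives_mp; [apply derives_thm, ax_S|exact IHpq]|exact IHp].
Qed.

Lemma derives_nil p : derives [] p -> LIiP CM p.
Proof.
  induction 1 as [p []|p Hthm|p q _ IHpq _ IHp]; [exact Hthm|].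
  eapply r_MP; eassumption.
Qed.

Lemma derives_ax_mp G p q : LIiP CM (FImp p q) -> derives G p -> derives G q.
Proof. intros Hpq Hp; eapply derives_mp; [apply derives_thm, Hpq|exact Hp]. Qed.

Lemma derives_ax_mp2 G p q r :
  LIiP CM (FImp p (FImp q r)) -> derives G p -> derives G q -> derives G r.
Proof. intros Hpqr Hp Hq; eapply derives_mp; [eapply derives_ax_mp|]; eassumption. Qed.

Lemma derives_dneg G p : derives G p -> derives G (FNot (FNot p)).
Proof.
  intro Hp.
  (* ~p -> p and ~p -> ~p refute ~p. *)
  eapply derives_ax_mp2; [apply (ax_notI CM (FNot p) p)| |].
  - eapply derives_ax_mp; [apply ax_K|exact Hp].
  - apply derives_thm, LIiP_imp_refl.
Qed.

Lemma box_of_knows_imp (M : msg Agent Data) (chi : form) :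
  LIiP CM (FImp (FImp (fk CM M) chi) (FBox M chi)).
Proof.
  apply derives_nil, deduction.
  eapply derives_ax_mp2; [apply ax_boxK| |apply derives_thm, ax_boxk].
  eapply derives_ax_mp; [apply ax_persist|now apply derives_hyp; left].
Qed.

Lemma knows_imp_of_dia_imp_box (M : msg Agent Data) (phi psi : form) :
  LIiP CM (FImp (FImp (fdia CM M phi) (FBox M psi)) (FImp (fk CM M) (FImp phi psi))).
Proof.
  apply derives_nil, deduction, deduction, deduction.
  set (G := [phi; fk CM M; FImp (fdia CM M phi) (FBox M psi)]).
  assert (Hk : derives G (fk CM M)) by (apply derives_hyp; simpl; auto).
  assert (Hphi : derives G phi) by (apply derives_hyp; simpl; auto).
  assert (Hdia : derives G (fdia CM M phi)).
  { apply derives_dneg; eapply derives_ax_mp2; [apply ax_andI|exact Hk|exact Hphi]. }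
  assert (Hbox : derives G (FBox M psi)).
  { eapply derives_mp; [apply derives_hyp; simpl; auto|exact Hdia]. }
  eapply derives_ax_mp2; [apply ax_boxT|exact Hbox|exact Hk].
Qed.

End Deduction.

Theorem theorem2p46 (Agent Data : Type) (CM : Agent) (HfinA : Finite Agent)
  (M : msg Agent Data) (phi psi : form Agent Data) :
  LIiP CM (FImp (FImp (fdia CM M phi) (FBox M psi)) (FBox M (FImp phi psi))).
Proof.
  apply derives_nil, deduction.
  eapply derives_ax_mp; [apply box_of_knows_imp|].
  eapply derives_ax_mp; [apply knows_imp_of_dia_imp_box|].
  now apply derives_hyp; left.
Qed.
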